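(* Let $\mathcal{U}$ be a finite-dimensional real Hilbert space, let $\mathcal{W}$ be a real Hilbert space, let $\phi:\mathcal{U}\to\mathcal{B}(\mathcal{U},\mathcal{W})$ be a map, and let $(u_i,y_i)\in\mathcal{U}\times\mathcal{U}$, $i=1,\dots,n$, be given data. For $Q\in\mathcal{B}(\mathcal{W})$ define $$L(Q)=\sum_{i=1}^n \big\|\phi(u_i)^*Q\,\phi(u_i)u_i-y_i\big\|_{\mathcal{U}}^2 .$$ Let $\hat{\mathcal{W}}=\sum_{i=1}^n \operatorname{im}\phi(u_i)\subset\mathcal{W}$ and let $\Pi\in\mathcal{B}(\mathcal{W})$ be the orthogonal projection onto $\hat{\mathcal{W}}$. Then: (1) $L(\Pi Q\Pi)=L(Q)$ for all $Q\in\mathcal{B}(\mathcal{W})$; (2) $\|\Pi Q\Pi\|\le\|Q\|$ for all $Q\in\mathcal{B}(\mathcal{W})$, where $\|\cdot\|$ is the operator norm; (3) $\Pi Q\Pi\in\mathcal{B}^+(\mathcal{W})$ for all $Q\in\mathcal{B}^+(\mathcal{W})$.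
   Context: $\mathcal{B}(\mathcal{U},\mathcal{W})$ denotes the bounded linear operators from $\mathcal{U}$ to $\mathcal{W}$, $\mathcal{B}(\mathcal{W})=\mathcal{B}(\mathcal{W},\mathcal{W})$, and $B^*$ is the adjoint of $B$. An operator $G$ on a Hilbert space $\mathcal{H}$ is called nonnegative if $\langle Gu,u\rangle_{\mathcal{H}}\ge 0$ for all $u\in\mathcal{H}$ (self-adjointness is not required), and $\mathcal{B}^+(\mathcal{H})$ denotes the set of nonnegative operators in $\mathcal{B}(\mathcal{H})$. *)

From HB Require Import structures.
From mathcomp Require Import all_boot all_order all_algebra.
From mathcomp Require Import all_classical all_reals all_analysis.
Set Implicit Arguments. Unset Strict Implicit. Unset Printing Implicit Defensive.
Import Order.TTheory GRing.Theory Num.Theory.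
Import numFieldNormedType.Exports.
Local Open Scope classical_set_scope.
Local Open Scope ring_scope.

(* A real Hilbert space is a complete normed R-module V together with an inner
   product ip whose induced norm is the norm of V. *)
Definition is_inner_product (R : realType) (V : normedModType R)
  (ip : V -> V -> R) : Prop :=
  [/\ (forall x y, ip x y = ip y x),
      (forall (a : R) x y z, ip (a *: x + y) z = a * ip x z + ip y z),
      (forall x, 0 <= ip x x) &
      (forall x, `|x| = Num.sqrt (ip x x))].

Definition finite_dim (R : realType) (V : normedModType R) : Prop :=
  exists (m : nat) (e : 'I_m -> V),
    forall v, exists c : 'I_m -> R, v = \sum_(j < m) c j *: e j.

Definition is_linear_op (R : realType) (V W : normedModType R) (f : V -> W) :=
  forall (a : R) x y, f (a *: x + y) = a *: f x + f y.

Definition is_bounded_op (R : realType) (V W : normedModType R) (f : V -> W) :=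
  exists M : R, forall x, `|f x| <= M * `|x|.

Definition is_bounded_linear (R : realType) (V W : normedModType R) (f : V -> W) :=
  is_linear_op f /\ is_bounded_op f.

Definition is_adjoint (R : realType) (V W : normedModType R)
  (ipV : V -> V -> R) (ipW : W -> W -> R) (A : V -> W) (Astar : W -> V) :=
  forall w v, ipV (Astar w) v = ipW w (A v).

Definition is_orth_proj (R : realType) (W : normedModType R)
  (ipW : W -> W -> R) (S : set W) (P : W -> W) :=
  forall w, S (P w) /\ (forall s, S s -> ipW (w - P w) s = 0).

Definition opnorm (R : realType) (V W : normedModType R) (f : V -> W) : R :=
  sup [set `|f x| | x in [set x : V | `|x| <= 1]].

(* nonnegative operator (self-adjointness not required) *)
Definition nonneg_op (R : realType) (W : normedModType R)
  (ipW : W -> W -> R) (G : W -> W) := forall w, 0 <= ipW (G w) w.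

Definition sum_images (R : realType) (U W : normedModType R) (n : nat)
  (phi : U -> U -> W) (u : 'I_n -> U) : set W :=
  [set w | exists x : 'I_n -> U, w = \sum_(i < n) phi (u i) (x i)].

Definition loss (R : realType) (U W : normedModType R) (n : nat)
  (phi : U -> U -> W) (phistar : U -> W -> U) (u y : 'I_n -> U)
  (Q : W -> W) : R :=
  \sum_(i < n) `|phistar (u i) (Q (phi (u i) (u i))) - y i| ^+ 2.

(* The vector w - Pi w is orthogonal to the range of every phi (u i), so
   phi (u i)^* Pi = phi (u i)^*, while Pi fixes phi (u i) (u i): each term of
   the loss is unchanged.  Pythagoras makes Pi a contraction, which bounds the
   operator norm, and self-adjointness of Pi gives
   <Pi Q Pi w, w> = <Q (Pi w), Pi w> >= 0. *)

From HB Require Import structures.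
From mathcomp Require Import all_boot all_order all_algebra.
From mathcomp Require Import all_classical all_reals all_analysis.
Import Order.TTheory GRing.Theory Num.Theory.
Import numFieldNormedType.Exports.
Local Open Scope classical_set_scope.
Local Open Scope ring_scope.

Section InnerProduct.
Context {R : realType} {V : normedModType R} {ip : V -> V -> R}.
Hypothesis hip : is_inner_product ip.

Lemma ipC x y : ip x y = ip y x.
Proof. by case: hip. Qed.

Lemma ipDl x y z : ip (x + y) z = ip x z + ip y z.
Proof. by case: hip => _ lin _ _; rewrite -{1}(scale1r x) lin mul1r. Qed.

Lemma ipBl x y z : ip (x - y) z = ip x z - ip y z.
Proof. by case: hip => _ lin _ _; rewrite addrC -scaleN1r lin mulN1r addrC. Qed.

Lemma ipBr x y z : ip x (y - z) = ip x y - ip x z.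
Proof. by rewrite ipC ipBl !(ipC x). Qed.

Lemma ip_pythagoras x y : ip y x = 0 -> ip (x + y) (x + y) = ip x x + ip y y.
Proof.
move=> yx0; rewrite !ipDl !(ipC _ (x + y)) !ipDl yx0 (ipC x y) yx0.
by rewrite addr0 add0r.
Qed.

Lemma ip_ge0 x : 0 <= ip x x.
Proof. by case: hip. Qed.

Lemma sqr_normr_ip x : `|x| ^+ 2 = ip x x.
Proof. by case: hip => _ _ ge0 ->; rewrite sqr_sqrtr. Qed.

Lemma ipxx_eq0 x : ip x x = 0 -> x = 0.
Proof.
by move=> x0; apply/normr0_eq0; case: hip => _ _ _ ->; rewrite x0 sqrtr0.
Qed.

End InnerProduct.

Lemma linear_op0 {R : realType} {V W : normedModType R} {f : V -> W} :
  is_linear_op f -> f 0 = 0.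
Proof.
move=> lin_f; have f00 := lin_f 1 0 0; rewrite !scale1r !addr0 in f00.
by apply: (addrI (f 0)); rewrite addr0 -f00.
Qed.

Section OrthogonalProjection.
Context {R : realType} {W : normedModType R} {ip : W -> W -> R}.
Hypothesis hip : is_inner_product ip.
Context {S : set W} {P : W -> W}.
Hypothesis hP : is_orth_proj ip S P.

Lemma orth_proj_id s : S s -> P s = s.
Proof.
move=> Ss; have [SPs orth_s] := hP s.
apply/eqP; rewrite eq_sym -subr_eq0; apply/eqP; apply: (ipxx_eq0 hip).
by rewrite (ipBr hip) orth_s // orth_s // subrr.
Qed.

Lemma orth_proj_ipl w s : S s -> ip (P w) s = ip w s.
Proof.
case: (hP w) => _ orth_w /orth_w.
by rewrite (ipBl hip) => /eqP; rewrite subr_eq0 => /eqP.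
Qed.

Lemma orth_proj_sym v w : ip (P v) w = ip v (P w).
Proof.
rewrite (ipC hip) -(orth_proj_ipl w _ (proj1 (hP v))).
by rewrite (ipC hip) orth_proj_ipl //; case: (hP w).
Qed.

Lemma orth_proj_pythagoras w : ip w w = ip (P w) (P w) + ip (w - P w) (w - P w).
Proof.
have [SPw orth_w] := hP w.
by have := ip_pythagoras hip _ _ (orth_w _ SPw); rewrite addrC subrK.
Qed.

Lemma normr_orth_proj_le w : `|P w| <= `|w|.
Proof.
rewrite -(@ler_pXn2r _ 2) ?nnegrE ?normr_ge0 // !(sqr_normr_ip hip).
by rewrite [leRHS]orth_proj_pythagoras lerDl (ip_ge0 hip).
Qed.

End OrthogonalProjection.

Lemma opnorm_ub {R : realType} {V W : normedModType R} {f : V -> W} x :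
  is_bounded_op f -> `|x| <= 1 -> `|f x| <= opnorm f.
Proof.
move=> [M bound_f] x_le1; apply: ub_le_sup; last by exists x.
exists `|M| => _ [z /= z_le1 <-]; apply: (le_trans (bound_f z)).
apply: (le_trans (ler_norm _)); rewrite normrM ler_piMr ?normr_id //.
Qed.

Lemma opnorm_contraction_comp {R : realType} {V W : normedModType R}
    {P1 : W -> W} {Q : V -> W} {P2 : V -> V} :
  (forall w, `|P1 w| <= `|w|) -> (forall v, `|P2 v| <= `|v|) ->
  is_bounded_op Q -> opnorm (P1 \o Q \o P2) <= opnorm Q.
Proof.
move=> P1_le P2_le bounded_Q; apply: ge_sup.
  by exists `|(P1 \o Q \o P2) 0|, 0; rewrite //= normr0.
move=> _ [x /= x_le1 <-]; apply: le_trans (P1_le _) _.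
exact: opnorm_ub bounded_Q (le_trans (P2_le x) x_le1).
Qed.

Lemma adjoint_orth_proj {R : realType} {U W : normedModType R}
    {ipU : U -> U -> R} {ipW : W -> W -> R} {S : set W} {P : W -> W}
    {A : U -> W} {Astar : W -> U} :
  is_inner_product ipU -> is_inner_product ipW -> is_orth_proj ipW S P ->
  is_adjoint ipU ipW A Astar -> (forall v, S (A v)) ->
  forall w, Astar (P w) = Astar w.
Proof.
move=> hipU hipW hP adj SA w; apply/eqP; rewrite -subr_eq0; apply/eqP.
by apply: (ipxx_eq0 hipU); rewrite (ipBl hipU) !adj (orth_proj_ipl hipW hP) // subrr.
Qed.

Lemma mem_sum_images {R : realType} {U W : normedModType R} {n : nat}
    {phi : U -> U -> W} {u : 'I_n -> U} i v :
  (forall j, is_linear_op (phi (u j))) -> sum_images phi u (phi (u i) v).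
Proof.
move=> lin_phi; exists (fun j => if j == i then v else 0).
rewrite (bigD1 i) //= eqxx big1 ?addr0 // => j /negbTE ->.
exact: linear_op0.
Qed.

Theorem lemma1 (R : realType) (U W : completeNormedModType R)
  (ipU : U -> U -> R) (ipW : W -> W -> R)
  (hipU : is_inner_product ipU) (hipW : is_inner_product ipW)
  (hUfin : finite_dim U)
  (phi : U -> U -> W)
  (hphi : forall v, is_bounded_linear (phi v))
  (phistar : U -> W -> U)
  (hphistar : forall v, is_adjoint ipU ipW (phi v) (phistar v))
  (n : nat) (u y : 'I_n -> U)
  (Pi : W -> W)
  (hPi : is_orth_proj ipW (sum_images phi u) Pi) :
  (forall Q : W -> W, is_bounded_linear Q ->
     loss phi phistar u y (Pi \o Q \o Pi) = loss phi phistar u y Q) /\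
  (forall Q : W -> W, is_bounded_linear Q ->
     opnorm (Pi \o Q \o Pi) <= opnorm Q) /\
  (forall Q : W -> W, is_bounded_linear Q -> nonneg_op ipW Q ->
     nonneg_op ipW (Pi \o Q \o Pi)).
Proof.
have im_phi i v : sum_images phi u (phi (u i) v).
  by apply: mem_sum_images => j; case: (hphi (u j)).
have Pi_le := normr_orth_proj_le hipW hPi.
split; [|split].
- move=> Q _; apply: eq_bigr => i _ /=.
  rewrite (orth_proj_id hipW hPi _ (im_phi i _)).
  by rewrite (adjoint_orth_proj hipU hipW hPi (hphistar _) (im_phi i)).
- by move=> Q [_ bounded_Q]; exact: (opnorm_contraction_comp Pi_le Pi_le bounded_Q).
- by move=> Q _ Q_ge0 w /=; rewrite (orth_proj_sym hipW hPi).
Qed.
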